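(* For every density operator $\rho$ on $\mathbb{C}^d$, $C_{\mathcal{F}}(\rho)\le\frac1d 2^{\mu_d(\rho)}$, where $\mu_d(\rho)=D_{\max}(\rho\,\|\,\Delta(\rho))$.
   Context: Fix the computational basis $\{|i\rangle\}_{i=0}^{d-1}$ of $\mathbb{C}^d$ as the incoherent basis and $\Delta(\rho)=\sum_i|i\rangle\langle i|\rho|i\rangle\langle i|$. A maximally coherent state is a pure state $\frac1{\sqrt d}\sum_{i}e^{\mathrm{i}\theta_i}|i\rangle$; the quantum coherence fraction is $C_{\mathcal{F}}(\rho)=\max_{|\phi\rangle\text{ maximally coherent}}\langle\phi|\rho|\phi\rangle$. The max-relative entropy is $D_{\max}(\rho\|\sigma)=\min\{\gamma\in\mathbb{R}:\rho\le 2^{\gamma}\sigma\}$ (logarithm base 2), so $\mu_d(\rho)=\min\{\gamma:\rho\le2^\gamma\Delta(\rho)\}$. *)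

From HB Require Import structures.
From mathcomp Require Import all_boot all_order all_algebra.
From mathcomp Require Import classical_sets boolp reals exp trigo.
From mathcomp Require Import complex.
Set Implicit Arguments.
Unset Strict Implicit.
Unset Printing Implicit Defensive.
Import Order.TTheory GRing.Theory Num.Theory.
Local Open Scope ring_scope.
Local Open Scope classical_set_scope.

Notation Cx R := (complex.complex R).

Definition rC (R : realType) (x : R) : Cx R := complex.Complex x 0.

Definition adjmx (R : realType) (m n : nat) (A : 'M[Cx R]_(m, n)) : 'M[Cx R]_(n, m) :=
  map_mx Num.conj A^T.

(* Positive semidefinite: <v|A|v> >= 0 for every vector v
   (on a numClosedField, 0 <= z means z is a nonnegative real). *)
Definition psdmx (R : realType) (d : nat) (A : 'M[Cx R]_d) : Prop :=
  forall v : 'cV[Cx R]_d, 0 <= (adjmx v *m A *m v) 0 0.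

Definition loewner_le (R : realType) (d : nat) (A B : 'M[Cx R]_d) : Prop :=
  psdmx (B - A).

Definition density (R : realType) (d : nat) (rho : 'M[Cx R]_d) : Prop :=
  psdmx rho /\ \tr rho = 1.

Definition dephase (R : realType) (d : nat) (rho : 'M[Cx R]_d) : 'M[Cx R]_d :=
  diag_mx (\row_i rho i i).

Definition expi (R : realType) (t : R) : Cx R := complex.Complex (cos t) (sin t).

Definition maxcoh (R : realType) (d : nat) (theta : 'I_d -> R) : 'cV[Cx R]_d :=
  \col_i (rC (Num.sqrt (d%:R : R))^-1 * expi (theta i)).

(* Coherence fraction: max over maximally coherent |phi> of <phi|rho|phi>
   (a real number for Hermitian rho; we take the real part). *)
Definition coh_fraction (R : realType) (d : nat) (rho : 'M[Cx R]_d) : R :=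
  sup [set complex.Re ((adjmx (maxcoh theta) *m rho *m maxcoh theta) 0 0)
       | theta in [set: 'I_d -> R]].

Definition Dmax (R : realType) (d : nat) (rho sigma : 'M[Cx R]_d) : R :=
  inf [set g : R | loewner_le rho
                     (rC (powR 2 g) *: sigma)].

Definition mu_d (R : realType) (d : nat) (rho : 'M[Cx R]_d) : R :=
  Dmax rho (dephase rho).

(* Evaluating the Loewner inequality [rho <= 2^g Delta(rho)] at a maximally
   coherent vector [phi] gives [<phi|rho|phi> <= 2^g <phi|Delta(rho)|phi>], and
   the right-hand side is [2^g tr(rho) / d = 2^g / d] because every entry of
   [phi] has modulus [1/sqrt d].  Taking the supremum over [phi] and then the
   infimum over the feasible exponents [g] proves the bound; the feasible set is
   nonempty since [rho <= 2^d Delta(rho)] for every positive semidefinite [rho]. *)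
From HB Require Import structures.
From mathcomp Require Import all_boot all_order all_algebra.
From mathcomp Require Import classical_sets boolp reals exp trigo.
From mathcomp Require Import complex.
From mathcomp Require Import ring.
Set Implicit Arguments.
Unset Strict Implicit.
Unset Printing Implicit Defensive.
Import Order.TTheory GRing.Theory Num.Theory.
Local Open Scope ring_scope.

Lemma le_powR_inf (R : realType) (b x : R) (S : set R) :
  1 < b -> (S !=set0)%classic -> (forall g, S g -> x <= b `^ g) ->
  x <= b `^ (inf S).
Proof.
move=> b_gt1 S_ne x_le.
have b_gt0 : 0 < b by apply: lt_trans b_gt1.
have [x_le0|x_gt0] := leP x 0; first exact: le_trans x_le0 (powR_ge0 _ _).
have lnb_gt0 : 0 < ln b by rewrite ln_gt0.
have log_le_inf : ln x / ln b <= inf S.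
  apply: (lb_le_inf S_ne) => g Sg.
  by rewrite ler_pdivrMr // -ln_powR ler_ln ?posrE ?powR_gt0 ?x_le.
have := ler_powR (ltW b_gt1) log_le_inf.
by rewrite {1}/powR gt_eqF // divfK ?gt_eqF // lnK.
Qed.

Lemma mxtrace_eq1_dim_gt0 (F : nzRingType) (n : nat) (A : 'M[F]_n) :
  \tr A = 1 -> (0 < n)%N.
Proof.
by case: n A => // A; rewrite /mxtrace big_ord0 => /eqP; rewrite eq_sym oner_eq0.
Qed.

Section QuadraticForm.
Variable R : realType.
Local Notation C := (Cx R).

Lemma adjmxD (m n : nat) (x y : 'M[C]_(m, n)) : adjmx (x + y) = adjmx x + adjmx y.
Proof. by rewrite /adjmx linearD /= map_mxD. Qed.

Lemma adjmxN (m n : nat) (x : 'M[C]_(m, n)) : adjmx (- x) = - adjmx x.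
Proof. by rewrite /adjmx linearN /= map_mxN. Qed.

Lemma adjmx_scale_delta (n : nat) (a : C) (i : 'I_n) :
  adjmx (a *: delta_mx i (0 : 'I_1)) = a^* *: delta_mx 0 i.
Proof.
apply/matrixP => r c; rewrite !mxE rmorphM /=; congr (_ * _).
by rewrite conjC_nat andbC.
Qed.

Variable d : nat.

Definition quadform (A : 'M[C]_d) (x : 'cV[C]_d) : C := (adjmx x *m A *m x) 0 0.

Lemma quadform0 A : quadform A 0 = 0.
Proof. by rewrite /quadform mulmx0 mxE. Qed.

Lemma quadformZ (c : C) A x : quadform (c *: A) x = c * quadform A x.
Proof. by rewrite /quadform -scalemxAr -scalemxAl mxE. Qed.

Lemma quadformB A B x : quadform (A - B) x = quadform A x - quadform B x.
Proof.
by rewrite /quadform mulmxBr mulmxBl; set u := _ *m x; set v := _ *m x; rewrite !mxE.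
Qed.

Lemma quadform_parallelogram A x y :
  quadform A (x + y) + quadform A (x - y) = 2 * quadform A x + 2 * quadform A y.
Proof.
rewrite /quadform !adjmxD adjmxN !mulmxDl !mulmxDr !mulNmx !mulmxN !mxE.
ring.
Qed.

Lemma quadform_scale_delta A (a : C) (i : 'I_d) :
  quadform A (a *: delta_mx i 0) = a^* * a * A i i.
Proof.
rewrite /quadform adjmx_scale_delta -!scalemxAl -scalemxAr -rowE -colE !mxE.
by rewrite mulrA.
Qed.

Lemma quadform_dephase A x :
  quadform (dephase A) x = \sum_i (x i 0)^* * x i 0 * A i i.
Proof.
rewrite /quadform /dephase mul_mx_diag mxE; apply: eq_bigr => i _.
by rewrite !mxE mulrAC.
Qed.

Lemma loewner_le_quadform A B :
  loewner_le A B <-> forall x, quadform A x <= quadform B x.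
Proof.
by split=> AB x; move: (AB x); rewrite -/(quadform _ x) quadformB subr_ge0.
Qed.

Section Psd.
Variables (A : 'M[C]_d) (A_psd : psdmx A).

Lemma psd_quadformD_le x y :
  quadform A (x + y) <= 2 * quadform A x + 2 * quadform A y.
Proof. by rewrite -quadform_parallelogram lerDl; apply: A_psd. Qed.

Lemma psd_quadform_sum_le n (u : 'I_n -> 'cV[C]_d) :
  quadform A (\sum_(i < n) u i) <= 2 ^+ n * \sum_(i < n) quadform A (u i).
Proof.
elim: n u => [|n IH] u; first by rewrite !big_ord0 quadform0 mulr0.
rewrite !big_ord_recl; apply: le_trans (psd_quadformD_le _ _) _.
rewrite exprS mulrDr -mulrA; apply: lerD.
  rewrite ler_wpM2l // ler_peMl //; first exact: A_psd.
  by apply: exprn_ege1; rewrite ler1n.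
by rewrite -mulrA ler_wpM2l // IH.
Qed.

Lemma psd_loewner_le_dephase : loewner_le A (rC (2 `^ d%:R) *: dephase A).
Proof.
apply/loewner_le_quadform => x; rewrite quadformZ powR_mulrn //.
have -> : rC (2 ^+ d : R) = 2 ^+ d.
  by rewrite -[rC _]/((2 ^+ d : R)%:C)%C rmorphXn rmorph_nat.
rewrite quadform_dephase {1}[x]matrix_sum_delta.
under eq_bigr do rewrite big_ord1.
under [X in _ <= _ * X]eq_bigr do rewrite -quadform_scale_delta.
exact: psd_quadform_sum_le.
Qed.

End Psd.

Lemma maxcoh_normCK (theta : 'I_d -> R) (i : 'I_d) :
  (maxcoh theta i 0)^* * maxcoh theta i 0 = rC (d%:R^-1).
Proof.
rewrite mulrC -normCK mxE normrM !normc_def /= expr0n /= addr0 cos2Dsin2 sqrtr1.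
rewrite sqrtr_sqr mulr1 ger0_norm ?invr_ge0 ?sqrtr_ge0 //.
by rewrite -rmorphXn /= exprVn sqr_sqrtr.
Qed.

Lemma quadform_dephase_maxcoh A theta :
  quadform (dephase A) (maxcoh theta) = rC (d%:R^-1) * \tr A.
Proof.
rewrite quadform_dephase mulr_sumr; apply: eq_bigr => i _.
by rewrite maxcoh_normCK.
Qed.

Lemma Re_quadform_maxcoh_le (rho : 'M[C]_d) (c : R) theta :
  \tr rho = 1 -> loewner_le rho (rC c *: dephase rho) ->
  complex.Re (quadform rho (maxcoh theta)) <= c / d%:R.
Proof.
move=> tr1 /loewner_le_quadform/(_ (maxcoh theta)).
rewrite quadformZ quadform_dephase_maxcoh tr1 mulr1 lecE => /andP[_].
by rewrite /= !(mulr0, mul0r, subr0).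
Qed.

End QuadraticForm.

Theorem mainTheorem6 (R : realType) (d : nat) (rho : 'M[Cx R]_d) :
  density rho ->
  coh_fraction rho <= (d%:R : R)^-1 * powR 2 (mu_d rho).
Proof.
move=> [rho_psd tr1].
have d_gt0 : (0 : R) < d%:R by rewrite ltr0n (mxtrace_eq1_dim_gt0 tr1).
rewrite /coh_fraction /mu_d /Dmax mulrC ler_pdivlMr //.
set T := [set _ | _ in _]%classic; set S := [set g | _]%classic.
have S_ne : (S !=set0)%classic by exists d%:R; exact: psd_loewner_le_dephase.
have T_ne : (T !=set0)%classic.
  by exists (complex.Re (quadform rho (maxcoh (fun=> 0)))), (fun=> 0).
apply: le_powR_inf => // [|g Sg]; first by rewrite ltr1n.
rewrite -ler_pdivlMr //; apply: ge_sup => // _ [theta _ <-].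
exact: Re_quadform_maxcoh_le.
Qed.
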